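(* Let $R$ be a field and $H$ a Hopf algebra over $R$ which is local and cocommutative. Let $S$ be a finite faithful $H$-extension of $R$ with $\mathrm{rank}_R(H)=\mathrm{rank}_R(S)$. Then $S/R$ is a Hopf-Galois extension with $H$ if and only if the Hopfological homology $S^H/IS$ of $S$ is zero.
   Context: $S$ is a finite $H$-extension of $R$ if $S$ is a finite-dimensional $R$-algebra which is a left $H$-module algebra with $S^H=R$, where $S^H=\{s\in S: hs=\varepsilon(h)s\ \forall h\in H\}$; it is faithful if $hs=0$ for all $s\in S$ implies $h=0$. $I=\{\lambda\in H: h\lambda=\varepsilon(h)\lambda\ \forall h\}$ is the set of left integrals and $IS$ is the $R$-subspace spanned by $\lambda s$, $\lambda\in I$, $s\in S$. $S/R$ is a Hopf-Galois extension with $H$ if the map $j:S\# H\to \mathrm{End}_R(S)$, $j(s\otimes h)(t)=s\,h(t)$, is bijective (where $S\#H$ is the smash product over $R$). *)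

(* Finite-dimensional Hopf algebras over a field R,
   with tensor products H (x) H and S (x) H represented in coordinates
   w.r.t. the canonical bases [vbasis fullv]. *)
From HB Require Import structures.
From mathcomp Require Import all_boot all_order all_algebra all_field.
Set Implicit Arguments. Unset Strict Implicit. Unset Printing Implicit Defensive.
Import GRing.Theory.
Local Open Scope ring_scope.

Section Hopf.
Variables (R : fieldType) (H : falgType R).
Local Notation d := (\dim {:H}).

Definition bvec (V : vectType R) (i : 'I_(\dim {:V})) : V := tnth (vbasis {:V}) i.

Definition tens (a b : H) : 'M[R]_(d, d) :=
  \matrix_(i, j) (coord (vbasis {:H}) i a * coord (vbasis {:H}) j b).

Definition mulT (X Y : 'M[R]_(d, d)) : 'M[R]_(d, d) :=
  \sum_(i < d) \sum_(j < d) \sum_(k < d) \sum_(l < d)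
     (X i j * Y k l) *: tens (bvec i * bvec k) (bvec j * bvec l).

Definition contr (V : lmodType R) (X : 'M[R]_(d, d)) (phi : H -> H -> V) : V :=
  \sum_(i < d) \sum_(j < d) X i j *: phi (bvec i) (bvec j).

Record hopf_algebra := HopfAlgebra {
  comul : H -> 'M[R]_(d, d);
  counit : H -> R;
  antipode : H -> H;
  comul_lin : forall (a : R) (u v : H), comul (a *: u + v) = a *: comul u + comul v;
  counit_lin : forall (a : R) (u v : H), counit (a *: u + v) = a * counit u + counit v;
  antipode_lin : forall (a : R) (u v : H), antipode (a *: u + v) = a *: antipode u + antipode v;
  comul1 : comul 1 = tens 1 1;
  comulM : forall a b, comul (a * b) = mulT (comul a) (comul b);
  counit1 : counit 1 = 1;
  counitM : forall a b, counit (a * b) = counit a * counit b;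
  (* (Delta (x) id) Delta = (id (x) Delta) Delta, coordinatewise in H(x)H(x)H *)
  coassoc : forall h (i j k : 'I_d),
    \sum_(a < d) comul h a k * comul (bvec a) i j =
    \sum_(b < d) comul h i b * comul (bvec b) j k;
  counitL : forall h, contr (comul h) (fun x y => counit x *: y) = h;
  counitR : forall h, contr (comul h) (fun x y => counit y *: x) = h;
  antipodeL : forall h, contr (comul h) (fun x y => antipode x * y) = (counit h)%:A;
  antipodeR : forall h, contr (comul h) (fun x y => x * antipode y) = (counit h)%:A
}.

Definition cocommutative (HA : hopf_algebra) := forall h, (comul HA h)^T = comul HA h.

Variable HA : hopf_algebra.
Variable S : falgType R.
Variable act : H -> S -> S.

Record module_algebra : Prop := {
  act_linl : forall (a : R) h k s, act (a *: h + k) s = a *: act h s + act k s;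
  act_linr : forall (a : R) h s t, act h (a *: s + t) = a *: act h s + act h t;
  act1 : forall s, act 1 s = s;
  actM : forall h k s, act (h * k) s = act h (act k s);
  act_mul : forall h s t, act h (s * t) = contr (comul HA h) (fun x y => act x s * act y t);
  act_unit : forall h, act h 1 = (counit HA h)%:A
}.

Definition invariant (s : S) := forall h, act h s = counit HA h *: s.

Definition H_extension :=
  module_algebra /\ (forall s, invariant s <-> exists r : R, s = r%:A).

Definition faithful_action := forall h, (forall s, act h s = 0) -> h = 0.

Definition left_integral (l : H) := forall h, h * l = counit HA h *: l.

Definition in_IS (s : S) :=
  exists n (c : 'I_n -> R) (l : 'I_n -> H) (t : 'I_n -> S),
    (forall k, left_integral (l k)) /\ s = \sum_(k < n) c k *: act (l k) (t k).

(* the Hopfological homology S^H / IS is zero, i.e. S^H is contained in IS *)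
Definition hopfological_homology_zero := forall s, invariant s -> in_IS s.

(* j : S # H -> End_R(S), j(s (x) h)(t) = s h(t), with S # H = S (x) H in
   coordinates *)
Definition galois_map (X : 'M[R]_(\dim {:S}, d)) : 'End(S) :=
  linfun (fun t : S => \sum_(i < \dim {:S}) \sum_(j < d) X i j *: (bvec i * act (bvec j) t)).

Definition hopf_galois := bijective galois_map.

End Hopf.

(* local ring: the non-units form an additive subgroup (equivalently,
   a unique maximal (left) ideal) *)
Definition local_algebra (R : fieldType) (A : falgType R) :=
  forall x y : A, x \isn't a GRing.unit -> y \isn't a GRing.unit -> (x + y) \isn't a GRing.unit.

(* Since H is local, its augmentation ideal ker(counit) consists of the
   nonunits, and a descent on dimension shows that every nonzero H-stable
   subspace of an H-module contains a nonzero invariant.  For H acting on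
   itself this gives a nonzero left integral lam.  Then lam S lies in S^H = R
   and is nonzero by faithfulness, so IS = S^H.  Moreover the subspace of
   those v with lam (s h(v)) = 0 for all s in S, h in H is H-stable and
   contains no nonzero scalar, hence is 0; so the functionals
   v |-> lam (s h(v)) span the dual of S and every R-endomorphism of S has the
   form u |-> sum f_i lam (s_i h_i(u)), which lies in the image of j by the
   module-algebra axiom.  Thus j is onto, and bijective as
   dim (S # H) = dim End_R(S). *)

From Pilot Require Import Defs.
From HB Require Import structures.
From mathcomp Require Import all_boot all_order all_algebra all_field.
Set Implicit Arguments. Unset Strict Implicit. Unset Printing Implicit Defensive.
Import GRing.Theory.
Local Open Scope ring_scope.

Section LinearAxiom.
Variables (R : pzRingType) (U V : lmodType R) (f : U -> V).
Hypothesis f_lin : forall a u v, f (a *: u + v) = a *: f u + f v.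

Definition linear_of_axiom : {linear U -> V} :=
  HB.pack f (GRing.isLinear.Build R U V *:%R f f_lin).

Lemma lin_axiom0 : f 0 = 0. Proof. exact: (linear0 linear_of_axiom). Qed.
Lemma lin_axiomD u v : f (u + v) = f u + f v.
Proof. exact: (linearD linear_of_axiom). Qed.
Lemma lin_axiomB u v : f (u - v) = f u - f v.
Proof. exact: (linearB linear_of_axiom). Qed.
Lemma lin_axiomZ a u : f (a *: u) = a *: f u.
Proof. by rewrite -[a *: u]addr0 f_lin lin_axiom0 addr0. Qed.
Lemma lin_axiom_sum I (r : seq I) (P : pred I) (F : I -> U) :
  f (\sum_(i <- r | P i) F i) = \sum_(i <- r | P i) f (F i).
Proof. exact: (linear_sum linear_of_axiom). Qed.
End LinearAxiom.

Lemma linfun_axiomE (R : fieldType) (aT rT : vectType R) (f : aT -> rT)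
  (f_lin : forall a u v, f (a *: u + v) = a *: f u + f v) : linfun f =1 f.
Proof. exact: (lfunE (linear_of_axiom f_lin)). Qed.

Lemma lfun_bij_of_limg (R : fieldType) (U V : vectType R) (f : 'Hom(U, V)) :
  \dim {:U} = \dim {:V} -> limg f = fullv -> bijective f.
Proof.
move=> dimUV imf.
have kerf : lker f == 0%VS.
  have := limg_ker_dim f fullv; rewrite capfv imf dimUV -dimv_eq0.
  by rewrite -{2}[\dim {:V}]add0n => /addIn ->.
exists f^-1%VF; first exact: lker0_lfunK kerf.
by move=> v; rewrite limg_lfunVK // imf memvf.
Qed.

Lemma sum_coord_bvec (R : fieldType) (V : vectType R) (v : V) :
  v = \sum_(i < \dim {:V}) coord (vbasis fullv) i v *: bvec i.
Proof.
rewrite {1}(coord_vbasis (memvf v)); apply: eq_bigr => i _.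
by rewrite /bvec (tnth_nth 0).
Qed.

Section LocalAlgebraModule.
Variables (R : fieldType) (H : falgType R) (V : vectType R).
Variables (m : H -> V -> V) (eps : H -> R).
Hypotheses (m_linl : forall a h k v, m (a *: h + k) v = a *: m h v + m k v)
  (m_linr : forall h a v w, m h (a *: v + w) = a *: m h v + m h w)
  (m1 : forall v, m 1 v = v) (mM : forall h k v, m (h * k) v = m h (m k v))
  (eps_lin : forall a h k, eps (a *: h + k) = a * eps h + eps k)
  (eps1 : eps 1 = 1) (epsM : forall h k, eps (h * k) = eps h * eps k)
  (loc : local_algebra H).

Let eps_linear a h k :
  (eps : H -> R^o) (a *: h + k) = a *: (eps h : R^o) + eps k.
Proof. exact: eps_lin. Qed.

Lemma character_unit_neq0 u : u \is a GRing.unit -> eps u != 0.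
Proof.
move=> Uu; apply/eqP=> eps_u0.
by have /eqP := epsM u^-1 u; rewrite mulVr // eps1 eps_u0 mulr0 oner_eq0.
Qed.

(* [u] and [(eps u)%:A - u] would be nonunits with the unit [(eps u)%:A]
   as their sum. *)
Lemma unit_of_character_neq0 u : eps u != 0 -> u \is a GRing.unit.
Proof.
move=> eps_u0; apply/negPn/negP => nUu.
have eps_shift : eps ((eps u)%:A - u) = 0.
  rewrite (lin_axiomB eps_linear) (lin_axiomZ eps_linear) /= eps1.
  by rewrite -[_%:A]/(eps u * 1) mulr1 subrr.
have nUshift : (eps u)%:A - u \isn't a GRing.unit.
  by apply/negP => /character_unit_neq0; rewrite eps_shift eqxx.
have := loc nUu nUshift; rewrite addrC subrK.
by rewrite (rmorph_unit (in_alg H)) // unitfE.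
Qed.

Definition aug_act (w : V) (x : H) : V := m x w - eps x *: w.

Lemma aug_act_linear w a x y :
  aug_act w (a *: x + y) = a *: aug_act w x + aug_act w y.
Proof.
rewrite /aug_act m_linl eps_lin scalerDl -scalerA scalerBr.
by rewrite addrACA opprD.
Qed.

Definition aug_span (w : V) : {vspace V} := limg (linfun (aug_act w)).

Lemma aug_spanP w v : v \in aug_span w <-> exists x, v = aug_act w x.
Proof.
have augE := linfun_axiomE (aug_act_linear w).
split; first by case/memv_imgP => x _ ->; exists x; exact: augE.
by case=> x ->; rewrite -augE; exact/memv_img/memvf.
Qed.

Lemma aug_span_stable w h v : v \in aug_span w -> m h v \in aug_span w.
Proof.
have m_linear_w a k l : m (a *: k + l) w = a *: m k w + m l w by exact: m_linl.
case/aug_spanP => x ->; apply/aug_spanP; exists (h * x - eps x *: h).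
rewrite /aug_act (lin_axiomB (m_linr h)) (lin_axiomZ (m_linr h)).
rewrite (lin_axiomB m_linear_w) (lin_axiomZ m_linear_w) mM.
rewrite (lin_axiomB eps_linear) (lin_axiomZ eps_linear) epsM /=.
by rewrite mulrC subrr scale0r subr0.
Qed.

Lemma aug_span_sub (U : {vspace V}) w :
  (forall h u, u \in U -> m h u \in U) -> w \in U -> (aug_span w <= U)%VS.
Proof.
move=> stU wU; apply/subvP => v /aug_spanP [x ->].
by rewrite memvB ?memvZ ?stU.
Qed.

(* [w = x w - eps x w] means that the unit [(1 + eps x)%:A - x], on which
   [eps] is [1], kills [w]. *)
Lemma notin_aug_span w : w != 0 -> w \notin aug_span w.
Proof.
move=> w0; apply/negP => /aug_spanP [x]; rewrite /aug_act => wE.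
pose u := (1 + eps x)%:A - x.
have Uu : u \is a GRing.unit.
  apply: unit_of_character_neq0.
  rewrite (lin_axiomB eps_linear) (lin_axiomZ eps_linear) /= eps1.
  by rewrite -[_%:A]/((1 + eps x) * 1) mulr1 addrK oner_eq0.
have m_linear_w a k l : m (a *: k + l) w = a *: m k w + m l w by exact: m_linl.
have uw0 : m u w = 0.
  rewrite (lin_axiomB m_linear_w) (lin_axiomZ m_linear_w) m1.
  have mxw : m x w = w + eps x *: w by apply/eqP; rewrite -subr_eq -wE.
  by rewrite mxw scalerDl scale1r subrr.
move: w0; rewrite -[w]m1 -(mulVr Uu) mM uw0.
by rewrite (lin_axiom0 (m_linr u^-1)) eqxx.
Qed.

Lemma aug_span_eq0 w : aug_span w = 0%VS -> forall h, m h w = eps h *: w.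
Proof.
move=> aug0 h; apply/eqP; rewrite -subr_eq0 -memv0 -aug0.
by apply/aug_spanP; exists h.
Qed.

Lemma exists_invariant (U : {vspace V}) :
  U != 0%VS -> (forall h u, u \in U -> m h u \in U) ->
  exists w, [/\ w \in U, w != 0 & forall h, m h w = eps h *: w].
Proof.
move: {2}(\dim U) (leqnn (\dim U)) => k; elim: k U => [|k IHk] U dimU U0 stU.
  by move: U0; rewrite -dimv_eq0 -leqn0 dimU.
have wU : vpick U \in U := memv_pick U.
have w0 : vpick U != 0 by rewrite vpick0.
have [aug0 | aug_neq0] := eqVneq (aug_span (vpick U)) 0%VS.
  by exists (vpick U); split; last exact: aug_span_eq0.
have augU := aug_span_sub stU wU.
have dim_aug : (\dim (aug_span (vpick U)) <= k)%N.
  rewrite -ltnS (leq_trans _ dimU) // (ltn_leqif (dimv_leqif_eq augU)).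
  by apply: contraNN (notin_aug_span w0) => /eqP->.
have [w [waug ww0 winv]] := IHk _ dim_aug aug_neq0 (@aug_span_stable _).
by exists w; split=> //; exact: (subvP augU).
Qed.

End LocalAlgebraModule.

Section ModuleAlgebra.
Variables (R : fieldType) (H : falgType R) (HA : hopf_algebra H).
Variables (S : falgType R) (act : H -> S -> S).
Hypothesis MA : module_algebra HA act.

Local Notation n := (\dim {:S}).
Local Notation d := (\dim {:H}).

Let act_linear h a s t : act h (a *: s + t) = a *: act h s + act h t.
Proof. exact: (act_linr MA). Qed.
Let act_linear_in s a h k : act (a *: h + k) s = a *: act h s + act k s.
Proof. exact: (act_linl MA). Qed.

Lemma galois_mapE X u :
  galois_map act X u = \sum_i \sum_j X i j *: (bvec i * act (bvec j) u).
Proof.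
apply: (linfun_axiomE _ u) => a t t'; rewrite scaler_sumr -big_split.
apply: eq_bigr => i _; rewrite scaler_sumr -big_split; apply: eq_bigr => j _.
by rewrite act_linear mulrDr -scalerAr scalerDr !scalerA mulrC.
Qed.

Lemma galois_map_linear a X Y :
  galois_map act (a *: X + Y) = a *: galois_map act X + galois_map act Y.
Proof.
apply/lfunP => u; rewrite add_lfunE scale_lfunE !galois_mapE scaler_sumr -big_split.
apply: eq_bigr => i _; rewrite scaler_sumr -big_split; apply: eq_bigr => j _.
by rewrite !mxE scalerDl scalerA.
Qed.

Definition in_galois_image (F : S -> S) := exists X, galois_map act X =1 F.

Lemma in_galois_image_ext F G : in_galois_image F -> F =1 G -> in_galois_image G.
Proof. by move=> [X XF] FG; exists X => u; rewrite XF. Qed.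

Lemma in_galois_image0 : in_galois_image (fun _ => 0).
Proof. by exists 0 => u; rewrite (lin_axiom0 galois_map_linear) lfunE. Qed.

Lemma in_galois_imageD F G :
  in_galois_image F -> in_galois_image G -> in_galois_image (fun u => F u + G u).
Proof.
move=> [X XF] [Y YG]; exists (X + Y) => u.
by rewrite (lin_axiomD galois_map_linear) add_lfunE XF YG.
Qed.

Lemma in_galois_imageZ a F :
  in_galois_image F -> in_galois_image (fun u => a *: F u).
Proof.
move=> [X XF]; exists (a *: X) => u.
by rewrite (lin_axiomZ galois_map_linear) scale_lfunE XF.
Qed.

Lemma in_galois_image_sum I (r : seq I) (F : I -> S -> S) :
  (forall i, in_galois_image (F i)) ->
  in_galois_image (fun u => \sum_(i <- r) F i u).
Proof.
move=> imF; elim: r => [|i r IHr].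
  by apply: in_galois_image_ext in_galois_image0 _ => u; rewrite big_nil.
apply: in_galois_image_ext (in_galois_imageD (imF i) IHr) _ => u.
by rewrite big_cons.
Qed.

Lemma in_galois_image_mul_act s g : in_galois_image (fun u => s * act g u).
Proof.
exists (\matrix_(i, j) (coord (vbasis fullv) i s * coord (vbasis fullv) j g)) => u.
rewrite galois_mapE [in RHS](sum_coord_bvec s) [in RHS](sum_coord_bvec g).
rewrite (lin_axiom_sum (act_linear_in u)) mulr_suml; apply: eq_bigr => i _.
rewrite -scalerAl mulr_sumr scaler_sumr; apply: eq_bigr => j _.
by rewrite mxE (lin_axiomZ (act_linear_in u)) -scalerAr scalerA.
Qed.

Lemma in_galois_image_mul_act_mul_act h s t g :
  in_galois_image (fun u => s * act h (t * act g u)).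
Proof.
have expand u : s * act h (t * act g u) = \sum_(a < d) \sum_(b < d)
    comul HA h a b *: ((s * act (bvec a) t) * act (bvec b * g) u).
  rewrite (act_mul MA) /contr mulr_sumr; apply: eq_bigr => a _.
  rewrite mulr_sumr; apply: eq_bigr => b _.
  by rewrite -scalerAr (actM MA) mulrA.
apply: in_galois_image_ext (fun u => esym (expand u)).
apply: in_galois_image_sum => a; apply: in_galois_image_sum => b.
exact/in_galois_imageZ/in_galois_image_mul_act.
Qed.

Section Integral.
Hypotheses
  (invariantE : forall s, Defs.invariant HA act s <-> exists r : R, s = r%:A)
  (faith : faithful_action act) (loc : local_algebra H).
Variable lam : H.
Hypotheses (lamI : left_integral HA lam) (lam0 : lam != 0).

Lemma invariant_act_integral x : Defs.invariant HA act (act lam x).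
Proof. by move=> h; rewrite -(actM MA) lamI (lin_axiomZ (act_linear_in x)). Qed.

Lemma exists_integral_coef x : exists r : R, act lam x == r%:A.
Proof. by have [r ->] := (invariantE _).1 (invariant_act_integral x); exists r. Qed.

Definition integral_coef x : R := xchoose (exists_integral_coef x).

Lemma act_integralE x : act lam x = (integral_coef x)%:A.
Proof. exact/eqP/(xchooseP (exists_integral_coef x)). Qed.

Lemma integral_coef_linear a x y :
  integral_coef (a *: x + y) = a * integral_coef x + integral_coef y.
Proof.
apply: (fmorph_inj (in_alg S)) => /=.
by rewrite -act_integralE act_linear !act_integralE scalerDl scalerA.
Qed.

Let integral_coef_linear_scalar a x y : (integral_coef : S -> R^o) (a *: x + y) =
  a *: (integral_coef x : R^o) + integral_coef y.
Proof. exact: integral_coef_linear. Qed.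

Lemma exists_integral_coef_neq0 : exists t, integral_coef t != 0.
Proof.
have [/existsP [k coef_k] | /existsPn coef0] :=
  boolP [exists k : 'I_n, integral_coef (bvec k) != 0]; first by exists (bvec k).
case/eqP: lam0; apply: faith => s.
rewrite (sum_coord_bvec s) (lin_axiom_sum (act_linear lam)) big1 // => k _.
rewrite (lin_axiomZ (act_linear lam)) act_integralE.
by rewrite (eqP (negbNE (coef0 k))) scale0r scaler0.
Qed.

Local Notation K := #|{: 'I_n * 'I_d}|.

Definition integral_pairing (v : S) : 'rV[R]_K :=
  \row_r integral_coef (bvec (enum_val r).1 * act (bvec (enum_val r).2) v).

Lemma integral_pairing_linear a v w :
  integral_pairing (a *: v + w) = a *: integral_pairing v + integral_pairing w.
Proof.
apply/rowP => r; rewrite !mxE act_linear mulrDr -scalerAr.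
exact: integral_coef_linear.
Qed.

Lemma integral_coef_mul_act_eq0 v :
  (forall (a : 'I_n) (c : 'I_d), integral_coef (bvec a * act (bvec c) v) = 0) ->
  forall s g, integral_coef (s * act g v) = 0.
Proof.
move=> coef0 s g; rewrite (sum_coord_bvec s) (sum_coord_bvec g).
rewrite (lin_axiom_sum (act_linear_in v)) mulr_suml.
rewrite (lin_axiom_sum integral_coef_linear_scalar) big1 // => a _.
rewrite -scalerAl (lin_axiomZ integral_coef_linear_scalar) mulr_sumr.
rewrite (lin_axiom_sum integral_coef_linear_scalar) big1 ?scaler0 // => c _.
rewrite (lin_axiomZ (act_linear_in v)) -scalerAr.
by rewrite (lin_axiomZ integral_coef_linear_scalar) coef0 scaler0.
Qed.

Lemma mem_lker_integral_pairing v : v \in lker (linfun integral_pairing) <->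
  forall s g, integral_coef (s * act g v) = 0.
Proof.
rewrite memv_ker (linfun_axiomE integral_pairing_linear); split=> [/eqP pv0 | coef0].
  apply: integral_coef_mul_act_eq0 => a c.
  by move/rowP/(_ (enum_rank (a, c))): pv0; rewrite !mxE enum_rankK.
by apply/eqP/rowP => r; rewrite !mxE coef0.
Qed.

Lemma lker_integral_pairing_stable h v :
  v \in lker (linfun integral_pairing) -> act h v \in lker (linfun integral_pairing).
Proof.
move/mem_lker_integral_pairing => coef0; apply/mem_lker_integral_pairing => s g.
by rewrite -(actM MA) coef0.
Qed.

(* A nonzero kernel would contain a nonzero invariant, i.e. a nonzero scalar,
   but [lam] does not vanish on [S]. *)
Lemma lker_integral_pairing_eq0 : lker (linfun integral_pairing) == 0%VS.
Proof.
apply/negPn/negP => ker0.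
have [w [wker w0 winv]] := exists_invariant (act_linl MA) (fun h => act_linr MA ^~ h)
  (act1 MA) (actM MA) (counit_lin HA) (counit1 HA) (counitM HA) loc ker0
  lker_integral_pairing_stable.
have [r wr] := (invariantE w).1 winv.
have [t coef_t] := exists_integral_coef_neq0.
have /eqP := (mem_lker_integral_pairing w).1 wker t 1.
rewrite (act1 MA) wr mulr_algr (lin_axiomZ integral_coef_linear_scalar) /=.
rewrite mulf_eq0 (negbTE coef_t) orbF => /eqP r0.
by move: w0; rewrite wr r0 scale0r eqxx.
Qed.

Lemma coord_integral_pairing k u : coord (vbasis fullv) k u =
  \sum_r integral_pairing u 0 r *
         coord (vbasis fullv) k ((linfun integral_pairing)^-1%VF (delta_mx 0 r)).
Proof.
rewrite -{1}(lker0_lfunK lker_integral_pairing_eq0 u).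
rewrite (linfun_axiomE integral_pairing_linear).
rewrite {1}(row_sum_delta (integral_pairing u)).
by rewrite !linear_sum; apply: eq_bigr => r _; rewrite !linearZ.
Qed.

Lemma in_galois_image_all (f : 'End(S)) : in_galois_image f.
Proof.
pose B r k :=
  coord (vbasis fullv) k ((linfun integral_pairing)^-1%VF (delta_mx 0 r)).
have expand u : f u = \sum_k \sum_r B r k *:
    (f (bvec k) * act lam (bvec (enum_val r).1 * act (bvec (enum_val r).2) u)).
  rewrite {1}(sum_coord_bvec u) linear_sum; apply: eq_bigr => k _.
  rewrite linearZ /= coord_integral_pairing scaler_suml; apply: eq_bigr => r _.
  by rewrite act_integralE mulr_algr scalerA mxE mulrC.
apply: in_galois_image_ext (fun u => esym (expand u)).
apply: in_galois_image_sum => k; apply: in_galois_image_sum => r.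
exact/in_galois_imageZ/in_galois_image_mul_act_mul_act.
Qed.

Lemma hopf_galois_of_integral : d = n -> hopf_galois act.
Proof.
move=> dimHS; have galoisE := linfun_axiomE galois_map_linear.
suff bijG : bijective (linfun (galois_map act)) by exact: (eq_bij bijG galoisE).
apply: lfun_bij_of_limg.
  by rewrite [LHS]dimvf dim_matrix dimHS !dimvf.
apply/eqP; rewrite eqEsubv subvf; apply/subvP => f _.
have [X Xf] := in_galois_image_all f.
rewrite (_ : f = linfun (galois_map act) X); first exact/memv_img/memvf.
by apply/lfunP => u; rewrite galoisE Xf.
Qed.

Lemma hopfological_homology_zero_of_integral : hopfological_homology_zero HA act.
Proof.
move=> s /(invariantE s) [r ->].
have [t coef_t] := exists_integral_coef_neq0.
exists 1%N, (fun=> r / integral_coef t), (fun=> lam), (fun=> t).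
split=> [_|]; first exact: lamI.
by rewrite big_ord1 act_integralE scalerA divfK.
Qed.

End Integral.

End ModuleAlgebra.

Lemma exists_left_integral (R : fieldType) (H : falgType R) (HA : hopf_algebra H) :
  local_algebra H -> exists2 lam : H, lam != 0 & left_integral HA lam.
Proof.
move=> loc; have H_neq0 : (fullv : {vspace H}) != 0%VS.
  by apply: contraNneq (oner_neq0 H) => H0; rewrite -memv0 -H0 memvf.
have mul_linl (a : R) (h k v : H) : (a *: h + k) * v = a *: (h * v) + k * v.
  by rewrite mulrDl scalerAl.
have mul_linr (h : H) (a : R) (v w : H) : h * (a *: v + w) = a *: (h * v) + h * w.
  by rewrite mulrDr scalerAr.
have [|lam [_ lam0 lamI]] := exists_invariant mul_linl mul_linr (@mul1r H)
    (fun h k v => esym (mulrA h k v)) (counit_lin HA) (counit1 HA) (counitM HA)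
    loc H_neq0.
  by move=> *; exact: memvf.
by exists lam.
Qed.

Theorem mainTheorem3 (R : fieldType) (H : falgType R) (HA : hopf_algebra H)
  (S : falgType R) (act : H -> S -> S) :
  local_algebra H -> cocommutative HA ->
  H_extension HA act -> faithful_action act ->
  \dim {:H} = \dim {:S} ->
  (hopf_galois act <-> hopfological_homology_zero HA act).
Proof.
move=> loc _ [MA invariantE] faith dimHS.
have [lam lam0 lamI] := exists_left_integral HA loc.
split=> _.
  exact: (hopfological_homology_zero_of_integral MA invariantE faith lamI).
exact: (hopf_galois_of_integral MA invariantE faith loc lamI lam0 dimHS).
Qed.
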